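(* Let $G$ be a $\tau$-regular undirected graph with node set $V$, adjacency matrix $A$, and a partition $V=S\cup T$, $S\cap T=\emptyset$, with exactly $m$ edges between $S$ and $T$. Consider the GNN $H_0=X\in\mathbb{R}^{|V|\times d}$, $H_{l+1}=\sigma(H_lW_{1l}^\top+AH_lW_{2l}^\top)$ for $l=0,1,\dots$, where $\sigma$ is the entrywise ReLU and $W_{1l},W_{2l}\in\mathbb{R}^{d\times d}$ satisfy $\|W_{1l}\|_{1\to1}\le1$, $\|W_{2l}\|_{1\to1}\le1$. Let $\alpha\in\mathbb{R}^{|V|\times d}$ satisfy $|\alpha_{ij}|\le\epsilon$ for $i\in S$ and $\alpha_{ij}=0$ for $i\in T$, and let $\varepsilon_l=H_l(X+\alpha)-H_l(X)$, where $H_l(\cdot)$ denotes the $l$-th layer output as a function of the input features. Then for every $l\ge0$ there exist $V_l\in\mathbb{R}^{d}_{\ge0}$ with $\|V_l\|_1\le d$ and $r_l\in\mathbb{R}^{|V|\times d}$ with $\sum_{i,j}|(r_l)_{ij}|\le 2d\epsilon m(l+1)(\tau+1)^l$ such that, entrywise, $$|(\varepsilon_l)_{ij}|\le \epsilon(\tau+1)^l\,(V_l)_j\,(\mathbf{1}_S)_i+(r_l)_{ij}\quad\text{for all } i\in V,\ j\in\{1,\dots,d\}.$$ In particular $\sum_{i\in T}\sum_j|(\varepsilon_l)_{ij}|\le 2d\epsilon m(l+1)(\tau+1)^l$.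
   Context: $\mathbf{1}_S\in\{0,1\}^{|V|}$ is the indicator vector of $S$. For $W\in\mathbb{R}^{d\times d}$, $\|W\|_{1\to1}=\max_k\sum_j|W_{jk}|$ is the operator norm induced by the $\ell_1$ norm (maximum absolute column sum). For a vector $V$, $\|V\|_1=\sum_j|V_j|$. *)

From mathcomp Require Import all_boot all_order all_algebra.
Set Implicit Arguments. Unset Strict Implicit. Unset Printing Implicit Defensive.
Import Order.TTheory GRing.Theory Num.Theory.
Local Open Scope ring_scope.

Definition undirected n (e : rel 'I_n) := (forall i j, e i j = e j i) /\ (forall i, ~~ e i i).
Definition regular n (e : rel 'I_n) (tau : nat) := forall i, #|[set j | e i j]| = tau.

Definition adjmx (R : nzRingType) n (e : rel 'I_n) : 'M[R]_n :=
  \matrix_(i, j) (e i j)%:R.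

(* number of (undirected) edges between S and its complement:
   ordered pairs (i,j) with i in S, j not in S *)
Definition cut_edges n (e : rel 'I_n) (S : {set 'I_n}) : nat :=
  #|[set p : 'I_n * 'I_n | [&& p.1 \in S, p.2 \notin S & e p.1 p.2]]|.

(* operator norm induced by l1: maximum absolute column sum *)
Definition norm11 (R : realDomainType) d (W : 'M[R]_d) : R :=
  \big[Num.max/0]_(k < d) \sum_(j < d) `|W j k|.

Definition relu (R : realDomainType) (x : R) : R := Num.max x 0.

Fixpoint gnn (R : realDomainType) n d (A : 'M[R]_n) (W1 W2 : nat -> 'M[R]_d)
  (X : 'M[R]_(n, d)) (l : nat) : 'M[R]_(n, d) :=
  match l with
  | 0 => X
  | l'.+1 => let H := gnn A W1 W2 X l' in
             map_mx (@relu R) (H *m (W1 l')^T + A *m H *m (W2 l')^T)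
  end.

Definition indic (R : nzRingType) n (S : {set 'I_n}) (i : 'I_n) : R := (i \in S)%:R.

From mathcomp Require Import all_boot all_order all_algebra.
From mathcomp Require Import ring lra.

(* Split the perturbation of layer l into a part supported on S, of size
   eps (tau+1)^l V_l, and a remainder r_l.  Since ReLU is 1-Lipschitz, one layer
   turns an entrywise bound M on the difference of its inputs into the bound
   M |W1|^T + A M |W2|^T; the columns of W1, W2 have l1-norm at most 1 and A has
   column sums tau, so this multiplies total mass by at most tau + 1.  Applied to
   the S-part, it returns an S-part with the averaged weight
   V_{l+1} = (|W1| V_l + tau |W2| V_l) / (tau + 1), except for the mass reaching
   nodes outside S through cut edges, at most eps (tau+1)^l m d per layer; this
   leak and the propagated remainder give r_{l+1}. *)

Set Implicit Arguments. Unset Strict Implicit. Unset Printing Implicit Defensive.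
Import Order.TTheory GRing.Theory Num.Theory.
Local Open Scope ring_scope.

Lemma sum_bool_natr (R : nzSemiRingType) (I : finType) (P : pred I) :
  \sum_i ((P i)%:R : R) = #|P|%:R.
Proof.
rewrite -sum1_card natr_sum [RHS]big_mkcond.
by apply: eq_bigr => i _; rewrite mulrb.
Qed.

Lemma scale_addmxE (R : pzRingType) m n c (M M' : 'M[R]_(m, n)) i j :
  (c *: M + M') i j = c * M i j + M' i j.
Proof. by rewrite !mxE. Qed.

Lemma relu_lipschitz (R : realDomainType) (a b : R) : `|relu a - relu b| <= `|a - b|.
Proof.
have := ler_norm (a - b); have := ler_norm (b - a); rewrite distrC => h1 h2.
rewrite /relu ler_norml.
by case: (leP a 0) => ha; case: (leP b 0) => hb;
  rewrite ?(max_r ha) ?(max_r hb) ?(max_l (ltW ha)) ?(max_l (ltW hb));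
  apply/andP; split; lra.
Qed.

Section RegularGraph.
Variables (R : realFieldType) (n tau : nat) (e : rel 'I_n).
Hypotheses (e_undirected : undirected e) (e_regular : regular e tau).

Lemma adj_row_sum i : \sum_i' ((e i i')%:R : R) = tau%:R.
Proof. by rewrite sum_bool_natr -(e_regular i) cardsE. Qed.

Lemma adj_col_sum i' : \sum_i ((e i i')%:R : R) = tau%:R.
Proof. by under eq_bigr => i _ do rewrite e_undirected.1; exact: adj_row_sum. Qed.

Lemma sum_adjmx_mul d (M : 'M[R]_(n, d)) k :
  \sum_i (adjmx R e *m M) i k = tau%:R * \sum_i M i k.
Proof.
under eq_bigr => i _ do rewrite mxE.
rewrite exchange_big mulr_sumr; apply: eq_bigr => i' _.
by under eq_bigr => i _ do rewrite /adjmx mxE; rewrite -mulr_suml adj_col_sum.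
Qed.

Definition deg_in (S : {set 'I_n}) i : R := \sum_i' (e i i')%:R * indic R S i'.

Lemma deg_in_le (S : {set 'I_n}) i : deg_in S i <= tau%:R.
Proof.
rewrite -(adj_row_sum i); apply: ler_sum => i' _.
by rewrite /indic; case: (i' \in S); rewrite ?mulr1 ?mulr0.
Qed.

Lemma sum_deg_in_compl (S : {set 'I_n}) :
  \sum_i (i \notin S)%:R * deg_in S i = (cut_edges e S)%:R.
Proof.
under eq_bigr => i _ do rewrite /deg_in mulr_sumr.
rewrite exchange_big pair_big /= /cut_edges cardsE -sum_bool_natr.
apply: eq_bigr => -[i' i] _ /=; rewrite /indic e_undirected.1.
by case: (i \in S); case: (i' \in S); case: (e i' i);
  rewrite ?(mulr1, mulr0, mul0r, mul1r).
Qed.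

End RegularGraph.

Section Propagation.
Variables (R : realFieldType) (n d tau : nat) (e : rel 'I_n) (S : {set 'I_n}).
Hypotheses (e_undirected : undirected e) (e_regular : regular e tau).
Implicit Types (W : 'M[R]_d) (V : 'I_d -> R) (M H : 'M[R]_(n, d)).

Local Notation A := (adjmx R e).

Definition abs_mix W V j := \sum_k V k * `|W j k|.

Lemma abs_mix_ge0 W V j : (forall k, 0 <= V k) -> 0 <= abs_mix W V j.
Proof. by move=> V_ge0; apply: sumr_ge0 => k _; rewrite mulr_ge0. Qed.

Lemma sum_abs_mix_le W V : norm11 W <= 1 -> (forall k, 0 <= V k) ->
  \sum_j abs_mix W V j <= \sum_k V k.
Proof.
move=> W_le1 V_ge0; rewrite exchange_big /=; apply: ler_sum => k _.
rewrite -mulr_sumr ler_piMr //; apply: le_trans W_le1.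
exact: (le_bigmax 0 (fun k => \sum_(j < d) `|W j k|) k).
Qed.

Lemma ler_norm_mix W (U V : 'I_d -> R) j : (forall k, `|U k| <= V k) ->
  `|\sum_k U k * W^T k j| <= abs_mix W V j.
Proof.
move=> UV; apply: le_trans (ler_norm_sum _ _ _) _; apply: ler_sum => k _.
by rewrite normrM mxE ler_wpM2r.
Qed.

Definition propagate W1 W2 M : 'M[R]_(n, d) :=
  \matrix_(i, j) (abs_mix W1 (M i) j + abs_mix W2 ((A *m M) i) j).

Lemma layer_diff_le W1 W2 H1 H2 M : (forall i k, `|(H1 - H2) i k| <= M i k) ->
  forall i j,
  `|(map_mx (@relu R) (H1 *m W1^T + A *m H1 *m W2^T)
     - map_mx (@relu R) (H2 *m W1^T + A *m H2 *m W2^T)) i j|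
  <= propagate W1 W2 M i j.
Proof.
move=> HM i j.
set P1 := H1 *m W1^T + _; set P2 := H2 *m W1^T + _.
have -> : (map_mx (@relu R) P1 - map_mx (@relu R) P2) i j
          = relu (P1 i j) - relu (P2 i j) by rewrite !mxE.
apply: le_trans (relu_lipschitz _ _) _.
have -> : P1 i j - P2 i j = (P1 - P2) i j by rewrite !mxE.
have -> : P1 - P2 = (H1 - H2) *m W1^T + A *m (H1 - H2) *m W2^T.
  by rewrite /P1 /P2 !(mulmxBl, mulmxBr) opprD addrACA.
rewrite mxE [propagate _ _ _ _ _]mxE; apply: le_trans (ler_normD _ _) _.
apply: lerD; rewrite mxE; apply: ler_norm_mix => k; first exact: HM.
rewrite !mxE; apply: le_trans (ler_norm_sum _ _ _) _; apply: ler_sum => i' _.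
by rewrite normrM /adjmx mxE ger0_norm ?ler0n // ler_wpM2l.
Qed.

Lemma propagate_scaleD W1 W2 c M M' :
  propagate W1 W2 (c *: M + M') = c *: propagate W1 W2 M + propagate W1 W2 M'.
Proof.
apply/matrixP => i j; rewrite !mxE /abs_mix mulrDr !mulr_sumr addrACA -!big_split /=.
rewrite mulmxDr -scalemxAr; apply: eq_bigr => k _; rewrite !mxE; ring.
Qed.

Lemma propagate_ge0 W1 W2 M : (forall i k, 0 <= M i k) ->
  forall i j, 0 <= propagate W1 W2 M i j.
Proof.
move=> M_ge0 i j; rewrite mxE addr_ge0 // abs_mix_ge0 // => k; rewrite mxE.
by apply: sumr_ge0 => i' _; rewrite /adjmx mxE mulr_ge0.
Qed.

Lemma sum_propagate_le W1 W2 M : norm11 W1 <= 1 -> norm11 W2 <= 1 ->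
  (forall i k, 0 <= M i k) ->
  \sum_i \sum_j propagate W1 W2 M i j <= tau.+1%:R * \sum_i \sum_k M i k.
Proof.
move=> W1_le1 W2_le1 M_ge0.
have AM_ge0 i k : 0 <= (A *m M) i k.
  by rewrite mxE; apply: sumr_ge0 => i' _; rewrite /adjmx mxE mulr_ge0.
have sum_AM : \sum_i \sum_k (A *m M) i k = tau%:R * \sum_i \sum_k M i k.
  by rewrite exchange_big [X in _ * X]exchange_big mulr_sumr; apply: eq_bigr => k _;
     rewrite (sum_adjmx_mul e_undirected e_regular).
under eq_bigr => i _ do rewrite (eq_bigr _ (fun j _ => mxE _ _ _ _)) big_split.
rewrite big_split /= -natr1 mulrDl mul1r addrC -sum_AM.
by apply: lerD; apply: ler_sum => i _; apply: sum_abs_mix_le.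
Qed.

Definition next_weight W1 W2 V j :=
  (abs_mix W1 V j + tau%:R * abs_mix W2 V j) / tau.+1%:R.

Definition leak W2 V : 'M[R]_(n, d) :=
  \matrix_(i, j) ((i \notin S)%:R * deg_in R e S i * abs_mix W2 V j).

Lemma next_weight_ge0 W1 W2 V j : (forall k, 0 <= V k) -> 0 <= next_weight W1 W2 V j.
Proof.
by move=> V_ge0; rewrite divr_ge0 ?addr_ge0 ?mulr_ge0 ?abs_mix_ge0.
Qed.

Lemma leak_ge0 W2 V i j : (forall k, 0 <= V k) -> 0 <= leak W2 V i j.
Proof.
move=> V_ge0; rewrite mxE !mulr_ge0 ?abs_mix_ge0 //.
by apply: sumr_ge0 => i' _; rewrite mulr_ge0.
Qed.

Lemma propagate_indic_le W1 W2 V i j : (forall k, 0 <= V k) ->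
  propagate W1 W2 (\matrix_(i, k) (indic R S i * V k)) i j
  <= tau.+1%:R * next_weight W1 W2 V j * indic R S i + leak W2 V i j.
Proof.
move=> V_ge0; have a1_ge0 := abs_mix_ge0 W1 j V_ge0.
have a2_ge0 := abs_mix_ge0 W2 j V_ge0.
have deg_le := deg_in_le R e_regular S i.
have -> : propagate W1 W2 (\matrix_(i, k) (indic R S i * V k)) i j
          = indic R S i * abs_mix W1 V j + deg_in R e S i * abs_mix W2 V j.
  rewrite mxE /abs_mix !mulr_sumr; congr (_ + _); apply: eq_bigr => k _; rewrite !mxE.
    by rewrite mulrA.
  by rewrite /deg_in !mulr_suml; apply: eq_bigr => i' _; rewrite /adjmx !mxE; ring.
rewrite /next_weight [tau.+1%:R * _]mulrC divfK ?pnatr_eq0 // mxE /indic.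
case: (i \in S); rewrite ?(mul0r, mul1r, add0r, addr0, mulr1, mulr0) //.
by rewrite lerD2l ler_wpM2r.
Qed.

Lemma sum_next_weight_le W1 W2 V : norm11 W1 <= 1 -> norm11 W2 <= 1 ->
  (forall k, 0 <= V k) -> \sum_k V k <= d%:R -> \sum_j next_weight W1 W2 V j <= d%:R.
Proof.
move=> W1_le1 W2_le1 V_ge0 sumV.
have sum1 := le_trans (sum_abs_mix_le W1_le1 V_ge0) sumV.
have sum2 := le_trans (sum_abs_mix_le W2_le1 V_ge0) sumV.
rewrite -mulr_suml big_split /= -mulr_sumr ler_pdivrMr // -natr1 mulrDr mulr1 addrC.
by rewrite lerD // [d%:R * _]mulrC ler_wpM2l.
Qed.

Lemma sum_leak_le W2 V : norm11 W2 <= 1 -> (forall k, 0 <= V k) ->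
  \sum_k V k <= d%:R ->
  \sum_i \sum_j leak W2 V i j <= (cut_edges e S)%:R * d%:R.
Proof.
move=> W2_le1 V_ge0 sumV.
under eq_bigr => i _ do rewrite (eq_bigr _ (fun j _ => mxE _ _ _ _)) -mulr_sumr.
rewrite -mulr_suml (sum_deg_in_compl R e_undirected) ler_wpM2l //.
exact: le_trans (sum_abs_mix_le W2_le1 V_ge0) sumV.
Qed.

End Propagation.

Lemma sum_compl_le (R : realFieldType) n d (S : {set 'I_n}) (D r : 'M[R]_(n, d))
    (x : 'I_d -> R) :
  (forall i j, 0 <= r i j) -> (forall i j, `|D i j| <= x j * indic R S i + r i j) ->
  \sum_(i | i \notin S) \sum_j `|D i j| <= \sum_i \sum_j r i j.
Proof.
move=> r_ge0 D_le; rewrite [leRHS](bigID (fun i => i \notin S)) /=.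
apply: ler_wpDr; first by rewrite sumr_ge0 // => i _; rewrite sumr_ge0.
apply: ler_sum => i iT; apply: ler_sum => j _.
by rewrite (le_trans (D_le i j)) // /indic (negbTE iT) mulr0 add0r.
Qed.

Lemma perturbation_neg_degenerate (R : realFieldType) n d (e : rel 'I_n)
    (S : {set 'I_n}) (alpha : 'M[R]_(n, d)) (eps : R) :
  (forall i j, i \in S -> `|alpha i j| <= eps) ->
  (forall i j, i \notin S -> alpha i j = 0) -> eps < 0 ->
  alpha = 0 /\ (d * cut_edges e S = 0)%N.
Proof.
move=> alpha_S alpha_T eps_lt0.
have notin_S i (j : 'I_d) : i \notin S.
  apply/negP => /(alpha_S i j) alpha_le; have := le_lt_trans alpha_le eps_lt0.
  by rewrite normr_lt0.
split; first by apply/matrixP => i j; rewrite mxE alpha_T ?notin_S.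
case: (posnP d) => [-> // | d_gt0].
suff -> : cut_edges e S = 0%N by rewrite muln0.
apply/eqP; rewrite cards_eq0; apply/eqP/setP => -[i i'].
by rewrite !inE /= (negbTE (notin_S i (Ordinal d_gt0))).
Qed.

Section GnnPerturbation.
Variables (R : realFieldType) (n d tau : nat) (e : rel 'I_n) (S : {set 'I_n})
  (W1 W2 : nat -> 'M[R]_d) (X alpha : 'M[R]_(n, d)) (eps : R).
Hypotheses (e_undirected : undirected e) (e_regular : regular e tau)
  (W1_le1 : forall l, norm11 (W1 l) <= 1) (W2_le1 : forall l, norm11 (W2 l) <= 1)
  (alpha_S : forall i j, i \in S -> `|alpha i j| <= eps)
  (alpha_T : forall i j, i \notin S -> alpha i j = 0)
  (eps_ge0 : 0 <= eps).

Local Notation delta l :=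
  (gnn (adjmx R e) W1 W2 (X + alpha) l - gnn (adjmx R e) W1 W2 X l).
Local Notation bound l :=
  (2 * d%:R * eps * (cut_edges e S)%:R * l.+1%:R * tau.+1%:R ^+ l).

Lemma bound_step l :
  tau.+1%:R * bound l + eps * tau.+1%:R ^+ l * ((cut_edges e S)%:R * d%:R) <= bound l.+1.
Proof.
set Q := d%:R * eps * (cut_edges e S)%:R * tau.+1%:R ^+ l.
have Q_ge0 : 0 <= Q by rewrite /Q !mulr_ge0 ?exprn_ge0.
have -> : tau.+1%:R * bound l + eps * tau.+1%:R ^+ l * ((cut_edges e S)%:R * d%:R)
          = (2 * l.+1%:R * tau.+1%:R + 1) * Q by rewrite /Q; ring.
have -> : bound l.+1 = 2 * l.+2%:R * tau.+1%:R * Q by rewrite /Q exprS; ring.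
rewrite ler_wpM2r // -[l.+2]addn1 natrD mulrDr mulrDl lerD2l mulr1.
by rewrite -natrM ler1n muln_gt0.
Qed.

Lemma delta_succ_le l (V : 'I_d -> R) (r : 'M[R]_(n, d)) :
  (forall k, 0 <= V k) -> (forall i k, 0 <= r i k) ->
  (forall i k, `|delta l i k| <= eps * tau.+1%:R ^+ l * V k * indic R S i + r i k) ->
  forall i j, `|delta l.+1 i j|
    <= eps * tau.+1%:R ^+ l.+1 * next_weight tau (W1 l) (W2 l) V j * indic R S i
       + (eps * tau.+1%:R ^+ l *: leak e S (W2 l) V + propagate e (W1 l) (W2 l) r) i j.
Proof.
move=> V_ge0 r_ge0 dom i j; set c := eps * tau.+1%:R ^+ l.
have c_ge0 : 0 <= c by rewrite mulr_ge0 ?exprn_ge0.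
pose U : 'M[R]_(n, d) := \matrix_(i, k) (indic R S i * V k).
apply: le_trans (layer_diff_le e (W1 l) (W2 l) (M := c *: U + r) _ i j) _.
  by move=> i' k; move: (dom i' k); rewrite !mxE mulrA [c * _ * _]mulrAC.
have U_le : c * propagate e (W1 l) (W2 l) U i j
    <= c * (tau.+1%:R * next_weight tau (W1 l) (W2 l) V j * indic R S i
            + leak e S (W2 l) V i j).
  by rewrite ler_wpM2l // propagate_indic_le.
have -> : eps * tau.+1%:R ^+ l.+1 = c * tau.+1%:R by rewrite exprSr mulrA.
rewrite propagate_scaleD !scale_addmxE; lra.
Qed.

Lemma gnn_diff_split l : exists (V : 'I_d -> R) (r : 'M[R]_(n, d)),
  [/\ forall j, 0 <= V j, \sum_j V j <= d%:R, forall i j, 0 <= r i j,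
      \sum_i \sum_j r i j <= bound l
    & forall i j, `|delta l i j| <= eps * tau.+1%:R ^+ l * V j * indic R S i + r i j].
Proof.
elim: l => [|l [V [r [V_ge0 sumV r_ge0 sum_r dom]]]].
  exists (fun=> 1), 0; split=> [//||i j|| i j].
  - by rewrite sumr_const card_ord.
  - by rewrite mxE.
  - rewrite big1 => [|i _]; last by rewrite big1 // => j _; rewrite mxE.
    by rewrite !mulr_ge0.
  rewrite !mxE addrAC subrr add0r expr0 mulr1 mulr1 addr0 /indic.
  case: (boolP (i \in S)) => iS; first by rewrite mulr1 alpha_S.
  by rewrite mulr0 alpha_T ?normr0.
set c := eps * tau.+1%:R ^+ l.
have c_ge0 : 0 <= c by rewrite mulr_ge0 ?exprn_ge0.
exists (next_weight tau (W1 l) (W2 l) V),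
       (c *: leak e S (W2 l) V + propagate e (W1 l) (W2 l) r); split.
- by move=> j; apply: next_weight_ge0.
- exact: sum_next_weight_le.
- move=> i j; rewrite scale_addmxE addr_ge0 ?(mulr_ge0 c_ge0) ?leak_ge0 //.
  exact: propagate_ge0.
- under eq_bigr => i _ do
    rewrite (eq_bigr _ (fun j _ => scale_addmxE c _ _ i j)) big_split /= -mulr_sumr.
  rewrite big_split /= -mulr_sumr addrC; apply: le_trans (bound_step l); apply: lerD.
    apply: le_trans (sum_propagate_le e_undirected e_regular _ _ r_ge0) _ => //.
    by rewrite ler_wpM2l.
  by rewrite ler_wpM2l // sum_leak_le.
- exact: delta_succ_le.
Qed.

End GnnPerturbation.

Theorem mainTheorem9 (R : realFieldType) (n d tau : nat) (e : rel 'I_n)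
  (S : {set 'I_n}) (W1 W2 : nat -> 'M[R]_d) (X alpha : 'M[R]_(n, d)) (eps : R) :
  undirected e -> regular e tau ->
  (forall l, norm11 (W1 l) <= 1) -> (forall l, norm11 (W2 l) <= 1) ->
  (forall i j, i \in S -> `|alpha i j| <= eps) ->
  (forall i j, i \notin S -> alpha i j = 0) ->
  let A := adjmx R e in
  let m := cut_edges e S in
  forall l : nat,
  let epsl := gnn A W1 W2 (X + alpha) l - gnn A W1 W2 X l in
  (exists (V : 'I_d -> R) (r : 'M[R]_(n, d)),
     [/\ (forall j, 0 <= V j), \sum_j V j <= d%:R,
         \sum_i \sum_j `|r i j| <= 2 * d%:R * eps * m%:R * l.+1%:R * (tau.+1)%:R ^+ l
       & forall i j, `|epsl i j| <= eps * (tau.+1)%:R ^+ l * V j * indic R S i + r i j])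
  /\ \sum_(i | i \notin S) \sum_j `|epsl i j|
       <= 2 * d%:R * eps * m%:R * l.+1%:R * (tau.+1)%:R ^+ l.
Proof.
move=> e_und e_reg W1_le1 W2_le1 alpha_S alpha_T A m l epsl.
have [eps_ge0 | eps_lt0] := leP 0 eps.
  have [V [r [V_ge0 sumV r_ge0 sum_r dom]]] :=
    gnn_diff_split X e_und e_reg W1_le1 W2_le1 alpha_S alpha_T eps_ge0 l.
  split; last exact: le_trans (sum_compl_le r_ge0 dom) sum_r.
  exists V, r; split=> //.
  by under eq_bigr => i _ do rewrite (eq_bigr _ (fun j _ => ger0_norm (r_ge0 i j))).
have [alpha0 dm0] := perturbation_neg_degenerate e alpha_S alpha_T eps_lt0.
have -> : epsl = 0 by rewrite /epsl alpha0 addr0 subrr.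
have -> : 2 * d%:R * eps * m%:R * l.+1%:R * tau.+1%:R ^+ l
          = 2 * eps * l.+1%:R * tau.+1%:R ^+ l * (d * m)%:R by rewrite natrM; ring.
rewrite /m dm0 mulr0.
have sum0 (M : 'M[R]_(n, d)) P : M = 0 -> \sum_(i | P i) \sum_j `|M i j| = 0.
  by move=> ->; rewrite big1 // => i _; rewrite big1 // => j _; rewrite mxE normr0.
split; last by rewrite sum0.
exists (fun=> 0), 0; split=> //.
- by rewrite big1.
- by rewrite sum0.
- by move=> i j; rewrite !mxE normr0 mulr0 mul0r addr0.
Qed.
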